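(* Let $g:[a,b]\to\mathbb R$ be increasing and left-continuous at every point of $(a,b)$, and let $f:[a,b]\to\mathbb R$ be $g$-Lipschitz continuous with Lipschitz constant $H$. Then $f^C$ is $g^C$-Lipschitz continuous with Lipschitz constant $H$.
   Context: For a function $\varphi:[a,b]\to\mathbb R$ having right limits, $\Delta^+\varphi(t)=\varphi(t^+)-\varphi(t)$, its jump part is $\varphi^B(t)=\sum_{s\in[a,t)}\Delta^+\varphi(s)$ and its continuous part is $\varphi^C=\varphi-\varphi^B$ (applied to both $f$ and $g$). For functions $u,v$ on $[a,b]$, $u$ is $v$-Lipschitz continuous with constant $H$ if $|u(t)-u(s)|\le H|v(t)-v(s)|$ for all $t,s\in[a,b]$. *)

From Stdlib Require Import Reals Lra List Classical ClassicalEpsilon.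
Import ListNotations.
Open Scope R_scope.

Definition right_lim_at (phi : R -> R) (b t l : R) : Prop :=
  forall eps, 0 < eps -> exists delta, 0 < delta /\
    forall s, t < s < t + delta -> s <= b -> Rabs (phi s - l) < eps.

(* phi(t^+) (chosen by Hilbert epsilon; unique when it exists and t < b) *)
Definition rlim (phi : R -> R) (b t : R) : R :=
  epsilon (inhabits 0) (fun l => right_lim_at phi b t l).

Definition delta_plus (phi : R -> R) (b t : R) : R := rlim phi b t - phi t.

Definition list_sum (u : R -> R) (F : list R) : R :=
  fold_right (fun x acc => u x + acc) 0 F.

(* Unordered (possibly uncountable-index) sum of u over the set D equals S:
   the net of finite partial sums over finite subsets of D converges to S. *)
Definition has_sum_over (u : R -> R) (D : R -> Prop) (S : R) : Prop :=
  forall eps, 0 < eps -> exists F0 : list R, Forall D F0 /\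
    forall F : list R, NoDup F -> Forall D F -> incl F0 F ->
      Rabs (list_sum u F - S) < eps.

(* Jump part: phi^B(t) = sum_{s in [a,t)} Delta^+ phi(s) *)
Definition jump_part (phi : R -> R) (a b t : R) : R :=
  epsilon (inhabits 0)
    (fun S => has_sum_over (delta_plus phi b) (fun s => a <= s < t) S).

(* Continuous part: phi^C = phi - phi^B *)
Definition cont_part (phi : R -> R) (a b t : R) : R :=
  phi t - jump_part phi a b t.

Definition rel_lipschitz (u v : R -> R) (a b H : R) : Prop :=
  forall t s, a <= t <= b -> a <= s <= b ->
    Rabs (u t - u s) <= H * Rabs (v t - v s).

Definition increasing_on (g : R -> R) (a b : R) : Prop :=
  forall x y, a <= x <= b -> a <= y <= b -> x <= y -> g x <= g y.

Definition left_continuous_at (g : R -> R) (a x : R) : Prop :=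
  forall eps, 0 < eps -> exists delta, 0 < delta /\
    forall y, x - delta < y <= x -> a <= y -> Rabs (g y - g x) < eps.

(** Let [s < t] in [[a,b]] and let [B] be a finite set of points of [[s,t)].
    Peeling off the largest point [m] of [B] and using induction on [[s,m]] gives
    [|f t - f s - sum_B Delta^+ f| <= H (g t - g s - sum_B Delta^+ g)]: on the
    remaining piece [(m,t]] only the right limits at [m] enter, and there the
    Lipschitz inequality survives the limit.  The jump sums converge because
    [|Delta^+ f| <= |H| Delta^+ g] and, by the same inequality for [g] itself,
    every finite sum of [Delta^+ g] over [[a,t)] is at most [g t - g a].
    Approximating [f^B t - f^B s] and [g^B t - g^B s] by sums over a common
    finite subset of [[s,t)] then transfers the inequality to the continuous
    parts. *)

From Pilot Require Import Defs.
From Stdlib Require Import Reals Lra Lia List Classical ClassicalEpsilon.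
Import ListNotations.
(* Re-import so that [Defs.list_sum] shadows [List.list_sum] (a sum of naturals). *)
Import Defs.
Open Scope R_scope.

Lemma Rabs_le_bounds x c : Rabs x <= c -> - c <= x <= c.
Proof. unfold Rabs; destruct (Rcase_abs x); intros; lra. Qed.

Lemma right_lim_at_ext phi psi b t l :
  (forall w, phi w = psi w) -> right_lim_at phi b t l -> right_lim_at psi b t l.
Proof.
  intros E hl eps heps. destruct (hl eps heps) as [d [hd Hd]].
  exists d; split; [exact hd|]. intros s hs hsb. rewrite <- E. auto.
Qed.

Lemma right_lim_at_affine phi b t l c k :
  right_lim_at phi b t l -> right_lim_at (fun w => c + k * phi w) b t (c + k * l).
Proof.
  intros hl eps heps.
  assert (hk : 0 < Rabs k + 1) by (pose proof (Rabs_pos k); lra).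
  destruct (hl (eps / (Rabs k + 1))) as [d [hd Hd]]; [apply Rdiv_lt_0_compat; lra|].
  exists d; split; [exact hd|]. intros s hs hsb.
  specialize (Hd s hs hsb).
  replace (c + k * phi s - (c + k * l)) with (k * (phi s - l)) by ring.
  rewrite Rabs_mult.
  apply Rle_lt_trans with ((Rabs k + 1) * Rabs (phi s - l)).
  - apply Rmult_le_compat_r; [apply Rabs_pos | lra].
  - apply (Rmult_lt_compat_l (Rabs k + 1)) in Hd; [|lra].
    replace ((Rabs k + 1) * (eps / (Rabs k + 1))) with eps in Hd by (field; lra).
    exact Hd.
Qed.

Lemma right_lim_at_plus phi psi b t l m :
  right_lim_at phi b t l -> right_lim_at psi b t m ->
  right_lim_at (fun w => phi w + psi w) b t (l + m).
Proof.
  intros hl hm eps heps.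
  destruct (hl (eps / 2)) as [d1 [hd1 H1]]; [lra|].
  destruct (hm (eps / 2)) as [d2 [hd2 H2]]; [lra|].
  exists (Rmin d1 d2); split; [apply Rmin_pos; lra|].
  intros s hs hsb. pose proof (Rmin_l d1 d2). pose proof (Rmin_r d1 d2).
  specialize (H1 s ltac:(lra) hsb). specialize (H2 s ltac:(lra) hsb).
  replace (phi s + psi s - (l + m)) with ((phi s - l) + (psi s - m)) by ring.
  pose proof (Rabs_triang (phi s - l) (psi s - m)). lra.
Qed.

Lemma right_lim_at_le phi psi b u c l m :
  u < b -> u < c -> right_lim_at phi b u l -> right_lim_at psi b u m ->
  (forall w, u < w < c -> w <= b -> phi w <= psi w) -> l <= m.
Proof.
  intros hub huc hl hm hle.
  destruct (Rle_or_lt l m) as [|hlt]; [assumption|exfalso].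
  destruct (hl ((l - m) / 2)) as [d1 [hd1 H1]]; [lra|].
  destruct (hm ((l - m) / 2)) as [d2 [hd2 H2]]; [lra|].
  set (d := Rmin (Rmin d1 d2) (Rmin (c - u) (b - u))).
  assert (hd : 0 < d) by (unfold d; repeat apply Rmin_pos; lra).
  assert (hdd : d <= Rmin d1 d2 /\ d <= Rmin (c - u) (b - u))
    by (split; [apply Rmin_l | apply Rmin_r]).
  pose proof (Rmin_l d1 d2). pose proof (Rmin_r d1 d2).
  pose proof (Rmin_l (c - u) (b - u)). pose proof (Rmin_r (c - u) (b - u)).
  set (w := u + d / 2).
  specialize (H1 w ltac:(unfold w; lra) ltac:(unfold w; lra)).
  specialize (H2 w ltac:(unfold w; lra) ltac:(unfold w; lra)).
  apply Rabs_def2 in H1. apply Rabs_def2 in H2.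
  assert (phi w <= psi w) by (apply hle; unfold w; lra).
  lra.
Qed.

Lemma right_lim_at_unique phi b t l1 l2 :
  t < b -> right_lim_at phi b t l1 -> right_lim_at phi b t l2 -> l1 = l2.
Proof.
  intros htb h1 h2.
  apply Rle_antisym; apply (right_lim_at_le phi phi b t b); auto; intros; lra.
Qed.

Lemma rlim_eq phi b t l : t < b -> right_lim_at phi b t l -> rlim phi b t = l.
Proof.
  intros htb hl. apply (right_lim_at_unique phi b t); [exact htb | | exact hl].
  exact (epsilon_spec (inhabits 0) (right_lim_at phi b t) (ex_intro _ l hl)).
Qed.

Lemma right_lim_at_abs_le p q b u c x y K l m :
  u < b -> u < c -> right_lim_at p b u l -> right_lim_at q b u m ->
  (forall w, u < w < c -> w <= b -> Rabs (p w - x) <= K * (q w - y)) ->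
  Rabs (l - x) <= K * (m - y).
Proof.
  intros hub huc hl hm hpq.
  assert (hup : l <= (x - K * y) + K * m).
  { apply (right_lim_at_le p (fun w => (x - K * y) + K * q w) b u c); auto.
    - now apply right_lim_at_affine.
    - intros w hw hwb. pose proof (Rabs_le_bounds _ _ (hpq w hw hwb)). lra. }
  assert (hlow : (x + K * y) + - K * m <= l).
  { apply (right_lim_at_le (fun w => (x + K * y) + - K * q w) p b u c); auto.
    - now apply right_lim_at_affine.
    - intros w hw hwb. pose proof (Rabs_le_bounds _ _ (hpq w hw hwb)). lra. }
  apply Rabs_le. lra.
Qed.

Lemma increasing_right_lim h a b t :
  increasing_on h a b -> a <= t < b -> exists l, right_lim_at h b t l /\ h t <= l.
Proof.
  intros hi ht.
  set (E := fun y => exists w, t < w <= b /\ y = - h w).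
  assert (hbd : bound E).
  { exists (- h t). intros y [w [hw ->]]. apply Ropp_le_contravar, hi; lra. }
  assert (hne : exists y, E y) by (exists (- h b), b; split; [lra | reflexivity]).
  destruct (completeness E hbd hne) as [m [hub hlub]].
  exists (- m). split.
  - intros eps heps.
    assert (hex : exists y, E y /\ m - eps < y).
    { apply NNPP; intro hn.
      assert (hmeps : is_upper_bound E (m - eps)).
      { intros y hy. destruct (Rle_or_lt y (m - eps)); auto. exfalso; eauto. }
      specialize (hlub _ hmeps). lra. }
    destruct hex as [y [[w [hw ->]] hy]].
    exists (w - t); split; [lra|]. intros s hs hsb.
    assert (h s <= h w) by (apply hi; lra).
    assert (- h s <= m) by (apply hub; exists s; split; [lra | reflexivity]).
    apply Rabs_def1; lra.
  - assert (m <= - h t).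
    { apply hlub. intros y [w [hw ->]]. apply Ropp_le_contravar, hi; lra. }
    lra.
Qed.

Lemma delta_plus_nonneg g a b x :
  increasing_on g a b -> a <= x < b -> 0 <= delta_plus g b x.
Proof.
  intros hg hx. unfold delta_plus.
  destruct (increasing_right_lim g a b x hg hx) as [l [hl hle]].
  rewrite (rlim_eq g b x l) by (auto; lra). lra.
Qed.

Lemma list_sum_app u l1 l2 : list_sum u (l1 ++ l2) = list_sum u l1 + list_sum u l2.
Proof. induction l1 as [|x l1 IH]; simpl; [ring | rewrite IH; ring]. Qed.

Lemma list_sum_ext u v F : (forall x, In x F -> u x = v x) -> list_sum u F = list_sum v F.
Proof.
  induction F as [|x F IH]; simpl; intros huv; [reflexivity|].
  rewrite huv, IH; auto.
Qed.

Lemma list_sum_le u v F : (forall x, In x F -> u x <= v x) -> list_sum u F <= list_sum v F.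
Proof.
  induction F as [|x F IH]; simpl; intros huv; [lra|].
  assert (u x <= v x) by auto. assert (list_sum u F <= list_sum v F) by auto. lra.
Qed.

Lemma list_sum_scal u k F : list_sum (fun x => k * u x) F = k * list_sum u F.
Proof. induction F as [|x F IH]; simpl; [ring | rewrite IH; ring]. Qed.

Lemma list_sum_minus u v F :
  list_sum (fun x => u x - v x) F = list_sum u F - list_sum v F.
Proof. induction F as [|x F IH]; simpl; [ring | rewrite IH; ring]. Qed.

Lemma list_sum_filter u p F :
  list_sum u F = list_sum u (filter p F) + list_sum u (filter (fun x => negb (p x)) F).
Proof. induction F as [|x F IH]; simpl; [ring|]. destruct (p x); simpl; rewrite IH; ring. Qed.

Lemma list_sum_nonneg u D F : (forall x, D x -> 0 <= u x) -> Forall D F -> 0 <= list_sum u F.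
Proof.
  intros hu hF. induction hF as [|x F hx _ IH]; simpl; [lra|].
  pose proof (hu x hx). lra.
Qed.

Lemma list_sum_incl_le u D F0 F :
  (forall x, D x -> 0 <= u x) -> NoDup F0 -> NoDup F -> incl F0 F -> Forall D F ->
  list_sum u F0 <= list_sum u F.
Proof.
  intros hu. revert F. induction F0 as [|x F0 IH]; intros F hnd0 hnd hincl hD.
  - simpl. eapply list_sum_nonneg; eauto.
  - destruct (in_split x F (hincl x (in_eq x F0))) as [l1 [l2 ->]].
    apply NoDup_cons_iff in hnd0 as [hx hnd0].
    rewrite Forall_forall in hD.
    assert (hincl' : incl F0 (l1 ++ l2)).
    { intros y hy. assert (hyF : In y (l1 ++ x :: l2)) by (apply hincl; right; exact hy).
      apply in_app_or in hyF. apply in_or_app.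
      destruct hyF as [|[<- | ]]; auto. contradiction. }
    assert (hD' : Forall D (l1 ++ l2)).
    { rewrite Forall_forall. intros y hy. apply hD, in_or_app.
      apply in_app_or in hy as [|]; [left | right; right]; auto. }
    specialize (IH (l1 ++ l2) hnd0 (NoDup_remove_1 _ _ _ hnd) hincl' hD').
    assert (0 <= u x) by (apply hu, hD, in_or_app; right; left; reflexivity).
    rewrite list_sum_app in *. simpl. lra.
Qed.

Lemma list_has_max (B : list R) : B <> [] -> exists m, In m B /\ forall x, In x B -> x <= m.
Proof.
  induction B as [|x l IH]; intro hB; [congruence|].
  destruct l as [|y l'].
  - exists x; split; [left; reflexivity|]. intros z [<- | []]; lra.
  - destruct IH as [m [hm hmax]]; [discriminate|].
    exists (Rmax x m). split.
    + unfold Rmax; destruct (Rle_dec x m); [right | left]; auto.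
    + intros z [<- | hz]; [apply Rmax_l|].
      eapply Rle_trans; [apply hmax; exact hz | apply Rmax_r].
Qed.

Lemma rel_lipschitz_refl g a b : rel_lipschitz g g a b 1.
Proof. intros x y _ _. lra. Qed.

Section RelLipschitz.

Variables (f g : R -> R) (a b H : R).
Hypothesis g_incr : increasing_on g a b.
Hypothesis f_lip : rel_lipschitz f g a b H.

Lemma rel_lipschitz_ordered x y :
  a <= x -> x <= y -> y <= b -> Rabs (f y - f x) <= H * (g y - g x).
Proof.
  intros hx hxy hy. assert (g x <= g y) by (apply g_incr; lra).
  rewrite <- (Rabs_right (g y - g x)) by lra. apply f_lip; lra.
Qed.

Lemma rel_lipschitz_ordered_abs x y :
  a <= x -> x <= y -> y <= b -> Rabs (f y - f x) <= Rabs H * (g y - g x).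
Proof.
  intros hx hxy hy. assert (g x <= g y) by (apply g_incr; lra).
  eapply Rle_trans; [apply rel_lipschitz_ordered; assumption|].
  apply Rmult_le_compat_r; [lra | apply Rle_abs].
Qed.

(* [f] is the difference of the increasing functions [f + |H| g] and [|H| g]. *)
Lemma rel_lipschitz_right_lim t : a <= t < b -> exists l, right_lim_at f b t l.
Proof.
  intros ht.
  assert (hphi : increasing_on (fun w => f w + Rabs H * g w) a b).
  { intros x y hx hy hxy.
    pose proof (Rabs_le_bounds _ _ (rel_lipschitz_ordered_abs x y ltac:(lra) hxy ltac:(lra))).
    lra. }
  destruct (increasing_right_lim _ a b t hphi ht) as [lp [hlp _]].
  destruct (increasing_right_lim g a b t g_incr ht) as [lg [hlg _]].
  exists (lp + (0 + - Rabs H * lg)).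
  eapply right_lim_at_ext; [|apply (right_lim_at_plus _ _ b t _ _ hlp (right_lim_at_affine _ _ _ _ 0 (- Rabs H) hlg))].
  intros w; simpl; ring.
Qed.

Lemma rel_lipschitz_from_right_lim u v :
  a <= u -> u < v -> v <= b -> Rabs (f v - rlim f b u) <= H * (g v - rlim g b u).
Proof.
  intros hu huv hvb.
  destruct (rel_lipschitz_right_lim u ltac:(lra)) as [lf hlf].
  destruct (increasing_right_lim g a b u g_incr ltac:(lra)) as [lg [hlg _]].
  rewrite (rlim_eq f b u lf), (rlim_eq g b u lg) by (auto; lra).
  rewrite <- Rabs_Ropp. replace (- (f v - lf)) with (lf - f v) by ring.
  replace (H * (g v - lg)) with (- H * (lg - g v)) by ring.
  apply (right_lim_at_abs_le f g b u v); auto; [lra|].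
  intros w hw hwb. rewrite <- Rabs_Ropp.
  replace (- (f w - f v)) with (f v - f w) by ring.
  replace (- H * (g w - g v)) with (H * (g v - g w)) by ring.
  apply rel_lipschitz_ordered; lra.
Qed.

Lemma delta_plus_rel_lipschitz x :
  a <= x < b -> Rabs (delta_plus f b x) <= Rabs H * delta_plus g b x.
Proof.
  intros hx. unfold delta_plus.
  destruct (rel_lipschitz_right_lim x hx) as [lf hlf].
  destruct (increasing_right_lim g a b x g_incr hx) as [lg [hlg _]].
  rewrite (rlim_eq f b x lf), (rlim_eq g b x lg) by (auto; lra).
  apply (right_lim_at_abs_le f g b x b); auto; try lra.
  intros w hw hwb. apply rel_lipschitz_ordered_abs; lra.
Qed.

Lemma rel_lipschitz_minus_jumps B s t :
  NoDup B -> (forall x, In x B -> s <= x < t) -> a <= s -> s <= t -> t <= b ->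
  Rabs (f t - f s - list_sum (delta_plus f b) B)
    <= H * (g t - g s - list_sum (delta_plus g b) B).
Proof.
  remember (length B) as n eqn:hn. revert B t hn.
  induction n as [|n IH]; intros B t hn hnd hB hs hst htb.
  - destruct B; [|discriminate]. simpl. rewrite !Rminus_0_r.
    apply rel_lipschitz_ordered; lra.
  - destruct (list_has_max B) as [m [hm hmax]]; [intros ->; discriminate|].
    assert (hmst : s <= m < t) by auto.
    destruct (in_split m B hm) as [l1 [l2 ->]].
    assert (hm' := NoDup_remove_2 _ _ _ hnd).
    assert (hB' : forall x, In x (l1 ++ l2) -> s <= x < m).
    { intros x hx.
      assert (hxB : In x (l1 ++ m :: l2))
        by (apply in_or_app; apply in_app_or in hx as [|]; [left | right; right]; auto).
      assert (x <> m) by (intros ->; contradiction).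
      specialize (hB x hxB). specialize (hmax x hxB). lra. }
    rewrite length_app in hn; simpl in hn.
    specialize (IH (l1 ++ l2) m ltac:(rewrite length_app; lia) (NoDup_remove_1 _ _ _ hnd)
                   hB' hs (proj1 hmst) ltac:(lra)).
    pose proof (rel_lipschitz_from_right_lim m t ltac:(lra) (proj2 hmst) htb) as hmt.
    rewrite !list_sum_app in *. simpl.
    replace (f t - f s - (list_sum (delta_plus f b) l1
               + (delta_plus f b m + list_sum (delta_plus f b) l2)))
      with ((f m - f s - (list_sum (delta_plus f b) l1 + list_sum (delta_plus f b) l2))
            + (f t - rlim f b m)) by (unfold delta_plus; ring).
    pose proof (Rabs_triang
      (f m - f s - (list_sum (delta_plus f b) l1 + list_sum (delta_plus f b) l2))
      (f t - rlim f b m)).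
    unfold delta_plus in *. nra.
Qed.

End RelLipschitz.

Lemma sum_delta_plus_le g a b t F :
  increasing_on g a b -> a <= t <= b -> NoDup F -> Forall (fun x => a <= x < t) F ->
  list_sum (delta_plus g b) F <= g t - g a.
Proof.
  intros hg ht hnd hF. rewrite Forall_forall in hF.
  pose proof (rel_lipschitz_minus_jumps g g a b 1 hg (rel_lipschitz_refl g a b)
                F a t hnd hF ltac:(lra) ltac:(lra) ltac:(lra)).
  pose proof (Rabs_pos (g t - g a - list_sum (delta_plus g b) F)). lra.
Qed.

Lemma has_sum_over_ext u v D S :
  (forall x, D x -> u x = v x) -> has_sum_over u D S -> has_sum_over v D S.
Proof.
  intros huv hS eps heps. destruct (hS eps heps) as [F0 [hF0 hF]].
  exists F0; split; [exact hF0|]. intros F hnd hD hincl.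
  rewrite <- (list_sum_ext u v F); [auto|].
  rewrite Forall_forall in hD. auto.
Qed.

Lemma has_sum_over_minus u v D S T :
  has_sum_over u D S -> has_sum_over v D T -> has_sum_over (fun x => u x - v x) D (S - T).
Proof.
  intros hu hv eps heps.
  destruct (hu (eps / 2)) as [F1 [h1 k1]]; [lra|].
  destruct (hv (eps / 2)) as [F2 [h2 k2]]; [lra|].
  exists (F1 ++ F2). split; [apply Forall_app; auto|].
  intros F hnd hD hincl. rewrite list_sum_minus.
  specialize (k1 F hnd hD (fun x hx => hincl x (in_or_app _ _ _ (or_introl hx)))).
  specialize (k2 F hnd hD (fun x hx => hincl x (in_or_app _ _ _ (or_intror hx)))).
  replace (list_sum u F - list_sum v F - (S - T))
    with ((list_sum u F - S) + (T - list_sum v F)) by ring.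
  rewrite Rabs_minus_sym in k2.
  pose proof (Rabs_triang (list_sum u F - S) (T - list_sum v F)). lra.
Qed.

Lemma has_sum_over_nonneg_bounded u D M :
  (forall x, D x -> 0 <= u x) ->
  (forall F, NoDup F -> Forall D F -> list_sum u F <= M) ->
  exists S, has_sum_over u D S.
Proof.
  intros hu hM.
  set (E := fun y => exists F, NoDup F /\ Forall D F /\ y = list_sum u F).
  assert (hbd : bound E) by (exists M; intros y [F [hnd [hD ->]]]; auto).
  assert (hne : exists y, E y) by (exists 0, []; repeat split; constructor).
  destruct (completeness E hbd hne) as [S [hub hlub]].
  exists S. intros eps heps.
  assert (hex : exists y, E y /\ S - eps < y).
  { apply NNPP; intro hn.
    assert (hSeps : is_upper_bound E (S - eps)).
    { intros y hy. destruct (Rle_or_lt y (S - eps)); auto. exfalso; eauto. }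
    specialize (hlub _ hSeps). lra. }
  destruct hex as [y [[F0 [hnd0 [hD0 ->]]] hy]].
  exists F0. split; [exact hD0|]. intros F hnd hD hincl.
  assert (list_sum u F <= S) by (apply hub; exists F; auto).
  assert (list_sum u F0 <= list_sum u F) by (eapply list_sum_incl_le; eauto).
  apply Rabs_def1; lra.
Qed.

Definition Rltb (x y : R) : bool := if Rlt_dec x y then true else false.

Lemma has_sum_over_increment u a s t Ss St e :
  s <= t -> 0 < e ->
  has_sum_over u (fun x => a <= x < s) Ss -> has_sum_over u (fun x => a <= x < t) St ->
  exists F0, Forall (fun x => a <= x < t) F0 /\
    forall F, NoDup F -> Forall (fun x => a <= x < t) F -> incl F0 F ->
      Rabs (St - Ss - list_sum u (filter (fun x => negb (Rltb x s)) F)) < 2 * e.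
Proof.
  intros hst he hs ht.
  destruct (ht e he) as [Ft [hFt kt]]. destruct (hs e he) as [Fs [hFs ks]].
  exists (Ft ++ Fs). split.
  { apply Forall_app; split; [exact hFt|].
    eapply Forall_impl; [|exact hFs]. simpl; intros; lra. }
  intros F hnd hF hincl.
  set (A := filter (fun x => Rltb x s) F).
  assert (hA : Forall (fun x => a <= x < s) A).
  { rewrite Forall_forall in hF |- *. intros x hx.
    apply filter_In in hx as [hx hxs]. specialize (hF x hx).
    unfold Rltb in hxs. destruct (Rlt_dec x s); [lra | discriminate]. }
  assert (hincl_s : incl Fs A).
  { intros x hx. apply filter_In. split; [apply hincl, in_or_app; right; exact hx|].
    rewrite Forall_forall in hFs. unfold Rltb.
    destruct (Rlt_dec x s); [reflexivity|]. specialize (hFs x hx). lra. }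
  specialize (kt F hnd hF (fun x hx => hincl x (in_or_app _ _ _ (or_introl hx)))).
  specialize (ks A (NoDup_filter _ hnd) hA hincl_s).
  rewrite (list_sum_filter u (fun x => Rltb x s) F) in kt. fold A in kt.
  apply Rabs_def2 in kt. apply Rabs_def2 in ks. apply Rabs_def1; lra.
Qed.

Lemma jump_part_spec phi a b t :
  (exists S, has_sum_over (delta_plus phi b) (fun s => a <= s < t) S) ->
  has_sum_over (delta_plus phi b) (fun s => a <= s < t) (jump_part phi a b t).
Proof. apply epsilon_spec. Qed.

(* [Delta^+ f] is the difference of the nonnegative families
   [Delta^+ f + |H| Delta^+ g] and [|H| Delta^+ g]. *)
Lemma jump_part_summable f g a b H t :
  increasing_on g a b -> rel_lipschitz f g a b H -> a <= t <= b ->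
  exists S, has_sum_over (delta_plus f b) (fun s => a <= s < t) S.
Proof.
  intros hg hf ht.
  pose proof (Rabs_pos H) as hH.
  assert (hbound : forall x, a <= x < t ->
    Rabs (delta_plus f b x) <= Rabs H * delta_plus g b x).
  { intros x hx. apply (delta_plus_rel_lipschitz f g a b H hg hf). lra. }
  assert (hgF : forall F, NoDup F -> Forall (fun x => a <= x < t) F ->
    list_sum (fun x => Rabs H * delta_plus g b x) F <= Rabs H * (g t - g a)).
  { intros F hnd hF. rewrite list_sum_scal.
    apply Rmult_le_compat_l; [exact hH|]. now apply sum_delta_plus_le. }
  destruct (has_sum_over_nonneg_bounded
              (fun x => delta_plus f b x + Rabs H * delta_plus g b x)
              (fun x => a <= x < t) (2 * (Rabs H * (g t - g a)))) as [S1 h1].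
  { intros x hx. pose proof (Rabs_le_bounds _ _ (hbound x hx)). lra. }
  { intros F hnd hF.
    apply Rle_trans with (list_sum (fun x => 2 * (Rabs H * delta_plus g b x)) F).
    - apply list_sum_le. intros x hx. rewrite Forall_forall in hF.
      pose proof (Rabs_le_bounds _ _ (hbound x (hF x hx))). lra.
    - rewrite list_sum_scal. specialize (hgF F hnd hF). lra. }
  destruct (has_sum_over_nonneg_bounded (fun x => Rabs H * delta_plus g b x)
              (fun x => a <= x < t) (Rabs H * (g t - g a)) ) as [S2 h2]; [|exact hgF|].
  { intros x hx. apply Rmult_le_pos; [exact hH|]. apply (delta_plus_nonneg g a b); auto; lra. }
  exists (S1 - S2).
  eapply has_sum_over_ext; [|exact (has_sum_over_minus _ _ _ _ _ h1 h2)].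
  intros x _; simpl; ring.
Qed.

Lemma cont_part_increment_approx f g a b H s t e :
  increasing_on g a b -> rel_lipschitz f g a b H -> a <= s < t -> t <= b -> 0 < e ->
  Rabs (cont_part f a b t - cont_part f a b s)
    <= H * (cont_part g a b t - cont_part g a b s) + 2 * (1 + Rabs H) * e.
Proof.
  intros hg hf hs ht he.
  assert (hgl := rel_lipschitz_refl g a b).
  destruct (has_sum_over_increment (delta_plus f b) a s t _ _ e ltac:(lra) he
              (jump_part_spec f a b s (jump_part_summable f g a b H s hg hf ltac:(lra)))
              (jump_part_spec f a b t (jump_part_summable f g a b H t hg hf ltac:(lra))))
    as [Ff [hFf kf]].
  destruct (has_sum_over_increment (delta_plus g b) a s t _ _ e ltac:(lra) he
              (jump_part_spec g a b s (jump_part_summable g g a b 1 s hg hgl ltac:(lra)))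
              (jump_part_spec g a b t (jump_part_summable g g a b 1 t hg hgl ltac:(lra))))
    as [Fg [hFg kg]].
  set (L := nodup Req_EM_T (Ff ++ Fg)).
  assert (hL : forall x, In x L <-> In x (Ff ++ Fg)) by (intros; apply nodup_In).
  assert (hLt : Forall (fun x => a <= x < t) L).
  { apply Forall_forall. intros x hx. apply hL in hx.
    rewrite Forall_forall in hFf, hFg. apply in_app_or in hx as [|]; auto. }
  assert (hndL : NoDup L) by apply NoDup_nodup.
  set (B := filter (fun x => negb (Rltb x s)) L).
  specialize (kf L hndL hLt (fun x hx => proj2 (hL x) (in_or_app _ _ _ (or_introl hx)))).
  specialize (kg L hndL hLt (fun x hx => proj2 (hL x) (in_or_app _ _ _ (or_intror hx)))).
  fold B in kf, kg.
  assert (hB : forall x, In x B -> s <= x < t).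
  { intros x hx. apply filter_In in hx as [hx hxs].
    rewrite Forall_forall in hLt. specialize (hLt x hx).
    unfold Rltb in hxs. destruct (Rlt_dec x s); [discriminate | lra]. }
  pose proof (rel_lipschitz_minus_jumps f g a b H hg hf B s t
                (NoDup_filter _ hndL) hB ltac:(lra) ltac:(lra) ht) as hfB.
  set (Sf := list_sum (delta_plus f b) B) in *.
  set (Sg := list_sum (delta_plus g b) B) in *.
  unfold cont_part.
  replace (f t - jump_part f a b t - (f s - jump_part f a b s))
    with ((f t - f s - Sf) + (Sf - (jump_part f a b t - jump_part f a b s))) by ring.
  replace (H * (g t - jump_part g a b t - (g s - jump_part g a b s)))
    with (H * (g t - g s - Sg) - H * (jump_part g a b t - jump_part g a b s - Sg)) by ring.
  rewrite Rabs_minus_sym in kf.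
  pose proof (Rabs_triang (f t - f s - Sf) (Sf - (jump_part f a b t - jump_part f a b s))).
  assert (hHg : H * (jump_part g a b t - jump_part g a b s - Sg) <= Rabs H * (2 * e)).
  { eapply Rle_trans; [apply Rle_abs|]. rewrite Rabs_mult.
    apply Rmult_le_compat_l; [apply Rabs_pos | lra]. }
  lra.
Qed.

Lemma cont_part_increment_le f g a b H s t :
  increasing_on g a b -> rel_lipschitz f g a b H -> a <= s < t -> t <= b ->
  Rabs (cont_part f a b t - cont_part f a b s)
    <= H * (cont_part g a b t - cont_part g a b s).
Proof.
  intros hg hf hs ht. apply Rle_plus_epsilon. intros eps heps.
  assert (hc : 0 < 2 * (1 + Rabs H)) by (pose proof (Rabs_pos H); lra).
  replace eps with (2 * (1 + Rabs H) * (eps / (2 * (1 + Rabs H)))) by (field; lra).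
  apply cont_part_increment_approx; auto. apply Rdiv_lt_0_compat; lra.
Qed.

Theorem mainTheorem5 (a b H : R) (f g : R -> R) :
  a < b ->
  increasing_on g a b ->
  (forall x, a < x < b -> left_continuous_at g a x) ->
  rel_lipschitz f g a b H ->
  rel_lipschitz (fun t => cont_part f a b t) (fun t => cont_part g a b t) a b H.
Proof.
  intros _ hg _ hf.
  assert (hordered : forall s t, a <= s < t -> t <= b ->
    Rabs (cont_part f a b t - cont_part f a b s)
      <= H * Rabs (cont_part g a b t - cont_part g a b s)).
  { intros s t hs ht.
    pose proof (cont_part_increment_le g g a b 1 s t hg (rel_lipschitz_refl g a b) hs ht).
    pose proof (Rabs_pos (cont_part g a b t - cont_part g a b s)).
    rewrite (Rabs_right (cont_part g a b t - cont_part g a b s)) by lra.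
    now apply cont_part_increment_le. }
  intros t s ht hs. simpl.
  destruct (Rtotal_order s t) as [hlt | [-> | hgt]].
  - apply hordered; lra.
  - rewrite !Rminus_diag, Rabs_R0. lra.
  - rewrite (Rabs_minus_sym (cont_part f a b t)), (Rabs_minus_sym (cont_part g a b t)).
    apply hordered; lra.
Qed.
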